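(* Let $I$ be a monomial ideal of a polynomial ring $Q=\Bbbk[x_1,\ldots,x_n]$, let $\mathbb{T}$ be the Taylor resolution of $Q/I$ (with respect to a fixed total order on $G(I)$), equipped with Gemeda's dg algebra structure, and let $A$ be a Morse matching on the Taylor graph of $I$. Suppose that $A_+$ is closed under taking supersets, i.e., if $V\in A_+$ and $V\subseteq W\subseteq G(I)$ then $W\in A_+$. Then the subcomplex $\mathbb{J}$ induced by $A$ is a dg ideal of $\mathbb{T}$ (i.e., $\mathbb{T}\mathbb{J}\subseteq\mathbb{J}$), and consequently $\mathbb{T}/\mathbb{J}$ admits the structure of a differential graded algebra.
   Context: Let $G(I)$ denote the set of minimal monomial generators of $I$, with a fixed total order $<$. For $U\subseteq G(I)$ put $m_U=\mathrm{lcm}\{u: u\in U\}$ ($m_\emptyset=1$). The Taylor resolution $\mathbb{T}$ of $Q/I$ has $\mathbb{T}_i$ free with basis $\{e_U: U\subseteq G(I), |U|=i\}$ and differential $\partial(e_U)=\sum_{u\in U}(-1)^{\sigma(u,U)}\frac{m_U}{m_{U\setminus\{u\}}}e_{U\setminus\{u\}}$, where $\sigma(u,U)=|\{v\in U: v<u\}|$. Gemeda's product: $e_V\cdot e_W=(-1)^{\sigma(V,W)}\frac{m_Vm_W}{m_{V\cup W}}e_{V\cup W}$ if $V\cap W=\emptyset$ and $0$ otherwise, where $\sigma(V,W)=|\{(v,w)\in V\times W: v>w\}|$; this makes $\mathbb{T}$ a dg algebra (graded-commutative, associative, unital, squares of odd elements zero, Leibniz rule $\partial(ab)=\partial(a)b+(-1)^{|a|}a\partial(b)$).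 The Taylor graph of $I$ is the directed graph whose vertices are the subsets of $G(I)$, with an edge $\sigma\to\tau$ iff $\tau\subseteq\sigma$, $|\tau|=|\sigma|-1$, $m_\sigma=m_\tau$ and $|\tau|\ge 2$. A Morse matching is a set $A$ of edges of the Taylor graph, no two sharing a vertex, such that reversing the edges of $A$ yields an acyclic directed graph; $A_+$ is the set of sources and $A_-$ the set of targets of edges in $A$. The subcomplex induced by $A$ is $\mathbb{J}=\bigoplus_{V\in A_+}(Qe_V\oplus Q\partial(e_V))$, i.e., the subcomplex spanned by $e_V$ and $\partial(e_V)$ for $V\in A_+$. A subcomplex $\mathbb{J}$ of a dg algebra $\mathbb{F}$ is a dg ideal if $\mathbb{F}\mathbb{J}\subseteq\mathbb{J}$. *)

From HB Require Import structures.
From mathcomp Require Import all_boot all_order all_algebra.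
From mathcomp Require Import fingraph.
From mathcomp.multinomials Require Import mpoly.

Set Implicit Arguments.
Unset Strict Implicit.
Unset Printing Implicit Defensive.

Import GRing.Theory.
Local Open Scope ring_scope.

(* The minimal generating set G(I) with its fixed total order is encoded as
   an injective family g : 'I_m -> 'X_{1..n} of monomials (exponent vectors),
   the total order on G(I) being the order of the indices in 'I_m. *)

Section Taylor.
Variables (R : fieldType) (n m : nat) (g : 'I_m -> 'X_{1..n}).

Definition mdiv (a b : 'X_{1..n}) : bool := [forall j : 'I_n, a j <= b j]%N.

Definition minimal_gens : Prop :=
  forall i j : 'I_m, i != j -> ~~ mdiv (g i) (g j).

(* m_U = lcm {g u : u in U}, m_emptyset = 1 (exponent vector) *)
Definition mlcm (U : {set 'I_m}) : 'X_{1..n} :=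
  [multinom (\max_(u in U) g u j)%N | j < n].

(* The Taylor module T = (+)_{U} Q e_U, elements stored by coefficients. *)
Definition Tay := {ffun {set 'I_m} -> {mpoly R[n]}}.

Definition tscale (c : {mpoly R[n]}) (x : Tay) : Tay := [ffun U => c * x U].

Definition tbasis (U : {set 'I_m}) : Tay := [ffun V => (V == U)%:R].

(* the monomial m_U / m_V, for V a subset of U *)
Definition mquo (U V : {set 'I_m}) : {mpoly R[n]} :=
  'X_[ [multinom (mlcm U j - mlcm V j)%N | j < n] ].

Definition sgn_pos (u : 'I_m) (U : {set 'I_m}) : nat := #|[set v in U | (val v < val u)%N]|.

Definition dbasis (U : {set 'I_m}) : Tay :=
  \sum_(u in U) tscale ((-1) ^+ sgn_pos u U * mquo U (U :\ u)) (tbasis (U :\ u)).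

Definition tdiff (x : Tay) : Tay := \sum_(U : {set 'I_m}) tscale (x U) (dbasis U).

Definition sgn_pair (V W : {set 'I_m}) : nat :=
  #|[set p in setX V W | (val p.2 < val p.1)%N]|.

Definition eprod (V W : {set 'I_m}) : Tay :=
  if [disjoint V & W] then
    tscale ((-1) ^+ sgn_pair V W *
            'X_[ [multinom (mlcm V j + mlcm W j - mlcm (V :|: W) j)%N | j < n] ])
           (tbasis (V :|: W))
  else 0.

Definition tmul (a b : Tay) : Tay :=
  \sum_(V : {set 'I_m}) \sum_(W : {set 'I_m}) tscale (a V * b W) (eprod V W).

Definition taylor_edge (s t : {set 'I_m}) : bool :=
  [&& t \subset s, #|t| == #|s|.-1, mlcm s == mlcm t & (2 <= #|t|)%N].

(* A Morse matching: a set of edges of the Taylor graph, pairwise vertex-disjoint,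
   such that reversing the edges of A gives an acyclic directed graph. *)
Definition reversed_rel (A : {set {set 'I_m} * {set 'I_m}}) : rel {set 'I_m} :=
  fun x y => (taylor_edge x y && ((x, y) \notin A)) || ((y, x) \in A).

Definition acyclic_rel (T : finType) (e : rel T) : Prop :=
  forall x y : T, e x y -> ~~ connect e y x.

Definition morse_matching (A : {set {set 'I_m} * {set 'I_m}}) : Prop :=
  [/\ forall p, p \in A -> taylor_edge p.1 p.2,
      forall p q, p \in A -> q \in A -> p != q ->
        [disjoint [set p.1; p.2] & [set q.1; q.2]]
    & acyclic_rel (reversed_rel A)].

Definition Aplus (A : {set {set 'I_m} * {set 'I_m}}) : {set {set 'I_m}} :=
  [set p.1 | p in A].

Definition inJ (A : {set {set 'I_m} * {set 'I_m}}) (x : Tay) : Prop :=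
  exists c d : {set 'I_m} -> {mpoly R[n]},
    x = \sum_(V in Aplus A) (tscale (c V) (tbasis V) + tscale (d V) (tdiff (tbasis V))).

End Taylor.

(* J is spanned by the e_V and d(e_V) with V in A_+, and it is d-stable because
   d o d = 0.  For products, e_W e_V is zero or a monomial multiple of e_(V u W),
   and V u W lies in A_+ because A_+ is closed under supersets; by the Leibniz
   rule, e_W d(e_V) = +-(d(e_W e_V) - d(e_W) e_V), whose two terms lie in J by
   the previous case.  A d-stable two-sided ideal lets the dg operations descend
   to T/J.  The only real computation is the Leibniz rule on basis elements: for
   disjoint V, W it reduces to counting inversions and to identities between lcm
   exponents; when V and W meet, every term vanishes except, if V :&: W = {u},
   the two terms indexed by u, which cancel. *)

From HB Require Import structures.
From mathcomp Require Import all_boot all_order all_algebra.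
From mathcomp.multinomials Require Import mpoly.
From mathcomp Require Import zify ring.

Set Implicit Arguments.
Unset Strict Implicit.
Unset Printing Implicit Defensive.

Lemma odd_addn_eqN (a b : nat) : odd (a + b) -> odd a = ~~ odd b.
Proof. by rewrite oddD; case: (odd a); case: (odd b). Qed.

Section SignCounts.
Variable m : nat.
Implicit Types (U V W : {set 'I_m}) (u v w x : 'I_m).

Definition sgn_above w V := #|[set v in V | (val w < val v)%N]|.

Lemma sgn_posD1 u v U :
  sgn_pos v U = ((u \in U) && (val u < val v)%N) + sgn_pos v (U :\ u).
Proof.
rewrite /sgn_pos (cardsD1 u [set w in U | _]) inE; congr (_ + _).
by apply: eq_card => w; rewrite !inE andbA.
Qed.

Lemma sgn_posD1id v U : sgn_pos v (U :\ v) = sgn_pos v U.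
Proof. by rewrite (sgn_posD1 v v U) ltnn andbF. Qed.

Lemma sgn_posU v V W : [disjoint V & W] ->
  sgn_pos v (V :|: W) = sgn_pos v V + sgn_pos v W.
Proof.
move=> dVW; rewrite /sgn_pos -cardsUI.
have -> : [set w in V :|: W | (val w < val v)%N] =
    [set w in V | (val w < val v)%N] :|: [set w in W | (val w < val v)%N].
  by apply/setP => w; rewrite !inE andb_orl.
suff -> : [set w in V | (val w < val v)%N] :&: [set w in W | (val w < val v)%N] = set0.
  by rewrite cards0 addn0.
apply/setP => w; rewrite !inE andbACA andbb.
by case: (boolP (w \in V)) => // /(disjointFr dVW) ->.
Qed.

Lemma sgn_above_pos w V : w \notin V -> sgn_above w V + sgn_pos w V = #|V|.
Proof.
move=> wV; rewrite /sgn_above /sgn_pos -(cardsID [set v : 'I_m | (val w < val v)%N] V).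
congr (_ + _); apply: eq_card => v; rewrite !inE //.
case: (boolP (v \in V)) => vV; rewrite ?andbF //= andbT -leqNgt ltn_neqAle.
suff -> : val v != val w by [].
by apply: contra wV => /eqP/val_inj <-.
Qed.

Lemma sgn_pairD1l v V W : v \in V ->
  sgn_pair V W = sgn_pos v W + sgn_pair (V :\ v) W.
Proof.
move=> vV; rewrite /sgn_pair -(cardsID [set p : 'I_m * 'I_m | p.1 == v]).
congr (_ + _); last first.
  by apply: eq_card => -[a b]; rewrite !inE /=; case: (a == v); rewrite ?andbF.
have inj : injective (fun b : 'I_m => (v, b)) by move=> a b [].
rewrite /sgn_pos -(card_imset _ inj).
apply: eq_card => -[a b]; rewrite !inE /=; apply/idP/imsetP.
  by case/andP=> /andP[/andP[_ bW] ltba] /eqP eav; subst a; exists b; rewrite ?inE ?bW.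
by case=> c; rewrite inE => /andP[cW ltcv] [-> ->]; rewrite vV cW ltcv eqxx.
Qed.

Lemma sgn_pairD1r w V W : w \in W ->
  sgn_pair V W = sgn_above w V + sgn_pair V (W :\ w).
Proof.
move=> wW; rewrite /sgn_pair -(cardsID [set p : 'I_m * 'I_m | p.2 == w]).
congr (_ + _); last first.
  by apply: eq_card => -[a b]; rewrite !inE /=; case: (b == w); rewrite ?andbF.
have inj : injective (fun a : 'I_m => (a, w)) by move=> a b [].
rewrite /sgn_above -(card_imset _ inj).
apply: eq_card => -[a b]; rewrite !inE /=; apply/idP/imsetP.
  by case/andP=> /andP[/andP[aV _] ltwa] /eqP ebw; subst b; exists a; rewrite ?inE ?aV.
by case=> c; rewrite inE => /andP[cV ltwc] [-> ->]; rewrite wW cV ltwc eqxx.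
Qed.

Lemma sgn_pair_meet u V W : u \in V -> u \in W ->
  odd (sgn_pos u V + sgn_pair (V :\ u) W) =
  ~~ odd (#|V| + sgn_pos u W + sgn_pair V (W :\ u)).
Proof.
move=> uV uW; apply: odd_addn_eqN.
have := sgn_above_pos (negbT (setD11 u V)).
rewrite sgn_posD1id (cardsD1 u V) uV add1n.
have -> : sgn_above u (V :\ u) = sgn_above u V.
  by apply: eq_card => v; rewrite !inE; case: (v =P u) => [->|] /=; rewrite ?ltnn ?andbF.
have := sgn_pairD1l W uV; have := sgn_pairD1r V uW.
move=> eP1 eP2 eV; rewrite -eV.
by rewrite (_ : _ + _ = (sgn_pos u V + sgn_pair V W).*2.+1) /= ?odd_double //; lia.
Qed.

Lemma sgn_pair_disjointl x V W : [disjoint V & W] -> x \in V ->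
  odd (sgn_pair V W + sgn_pos x (V :|: W)) = odd (sgn_pos x V + sgn_pair (V :\ x) W).
Proof.
move=> dVW xV; rewrite (sgn_pairD1l W xV) (sgn_posU x dVW) !oddD.
by do 3![case: (odd _)].
Qed.

Lemma sgn_pair_disjointr x V W : [disjoint V & W] -> x \in W ->
  sgn_pair V W + sgn_pos x (V :|: W) = #|V| + sgn_pos x W + sgn_pair V (W :\ x).
Proof.
move=> dVW xW; rewrite (sgn_pairD1r V xW) (sgn_posU x dVW).
rewrite -(sgn_above_pos (negbT (disjointFl dVW xW))); lia.
Qed.

End SignCounts.

Lemma setD1_notin (T : finType) (A : {set T}) x : x \notin A -> A :\ x = A.
Proof. by move=> xA; apply/setDidPl; rewrite disjoint_sym disjoints1. Qed.

Lemma setI_eq1_disjointD1l (T : finType) (V W : {set T}) v : ~~ [disjoint V & W] ->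
  (V :&: W == [set v]) = (v \in V) && [disjoint V :\ v & W].
Proof.
rewrite -setI_eq0 => /set0Pn[y yVW].
rewrite -setI_eq0 setIDAC setD_eq0 eqEsubset sub1set.
apply/andP/andP => [[sub1 /setIP[vV _]] | [vV sub1]]; first by split.
by split=> //; have /set1P <- := subsetP sub1 y yVW.
Qed.

Lemma setI_eq1_disjointD1r (T : finType) (V W : {set T}) w : ~~ [disjoint V & W] ->
  (V :&: W == [set w]) = (w \in W) && [disjoint V & W :\ w].
Proof.
by move=> meet; rewrite setIC setI_eq1_disjointD1l 1?disjoint_sym // disjoint_sym.
Qed.

Section MonomialLcm.
Variables (n m : nat) (g : 'I_m -> 'X_{1..n}).
Implicit Types (U V W : {set 'I_m}).

Lemma mlcmE U j : mlcm g U j = (\max_(u in U) g u j)%N.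
Proof. by rewrite mnmE. Qed.

Lemma mlcmU V W j : mlcm g (V :|: W) j = maxn (mlcm g V j) (mlcm g W j).
Proof. by rewrite !mlcmE big_setU //; apply: maxnn. Qed.

Lemma mlcmS V W j : V \subset W -> (mlcm g V j <= mlcm g W j)%N.
Proof. by move/setUidPr => <-; rewrite mlcmU leq_maxl. Qed.

End MonomialLcm.

Import GRing.Theory.
Local Open Scope ring_scope.

Lemma big_distinct_pairs_antisym (M : zmodType) m (U : {set 'I_m})
    (F : 'I_m -> 'I_m -> M) :
  (forall u v, u \in U -> v \in U -> (val u < val v)%N -> F u v + F v u = 0) ->
  \sum_(u in U) \sum_(v in U :\ u) F u v = 0.
Proof.
move=> Fanti.
have splitD1 u : \sum_(v in U :\ u) F u v =
    \sum_(v in U | (val u < val v)%N) F u v + \sum_(v in U | (val v < val u)%N) F u v.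
  rewrite (bigID (fun v => (val u < val v)%N)) /=; congr (_ + _); apply: eq_bigl => v.
    by rewrite !inE -andbA; case: eqP => [->|]; rewrite ?ltnn ?andbF.
  rewrite !inE -leqNgt ltn_neqAle -(inj_eq val_inj).
  by case: (v \in U); case: (_ != _).
have swap : \sum_(u in U) \sum_(v in U | (val v < val u)%N) F u v =
    \sum_(u in U) \sum_(v in U | (val u < val v)%N) F v u.
  rewrite (exchange_big_dep (mem U)) /=; last by move=> u v _ /andP[].
  by apply: eq_bigr => u uU; apply: eq_bigl => v; rewrite uU.
rewrite (eq_bigr _ (fun u _ => splitD1 u)) big_split /= swap -big_split big1 // => u uU.
by rewrite -big_split big1 // => v /andP[vU ltuv]; apply: Fanti.
Qed.

Section TaylorAlgebra.
Variables (R : fieldType) (n m : nat) (g : 'I_m -> 'X_{1..n}).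
Local Notation T := (Tay R n m).
Local Notation P := {mpoly R[n]}.
Local Notation e := (tbasis R n).
Local Notation de := (dbasis R g).
Local Notation d := (@tdiff R n m g).
Local Notation mul := (@tmul R n m g).
Implicit Types (U V W : {set 'I_m}) (x y z : T) (c : P).

Lemma tscaleDr c x y : tscale c (x + y) = tscale c x + tscale c y.
Proof. by apply/ffunP => U; rewrite !ffunE mulrDr. Qed.

Lemma tscaleDl c c' x : tscale (c + c') x = tscale c x + tscale c' x.
Proof. by apply/ffunP => U; rewrite !ffunE mulrDl. Qed.

Lemma tscale0l x : tscale 0 x = 0.
Proof. by apply/ffunP => U; rewrite !ffunE mul0r. Qed.

Lemma tscale0r c : tscale c (0 : T) = 0.
Proof. by apply/ffunP => U; rewrite !ffunE mulr0. Qed.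

Lemma tscale1 x : tscale 1 x = x.
Proof. by apply/ffunP => U; rewrite !ffunE mul1r. Qed.

Lemma tscaleA c c' x : tscale c (tscale c' x) = tscale (c * c') x.
Proof. by apply/ffunP => U; rewrite !ffunE mulrA. Qed.

Lemma tscaleN1 x : tscale (-1) x = - x.
Proof. by apply/ffunP => U; rewrite !ffunE mulN1r. Qed.

Lemma tscale_sumr c I (r : seq I) (Q : pred I) (F : I -> T) :
  tscale c (\sum_(i <- r | Q i) F i) = \sum_(i <- r | Q i) tscale c (F i).
Proof. exact: (big_morph _ (tscaleDr c) (tscale0r c)). Qed.

Lemma tscale_sign_invol k x : tscale ((-1) ^+ k) (tscale ((-1) ^+ k) x) = x.
Proof. by rewrite tscaleA -expr2 sqrr_sign tscale1. Qed.

Lemma tay_decomp x : x = \sum_U tscale (x U) (e U).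
Proof.
apply/ffunP => V; rewrite sum_ffunE (bigD1 V) //= big1 => [|U /negPf UV].
  by rewrite !ffunE eqxx mulr1 addr0.
by rewrite !ffunE eq_sym UV mulr0.
Qed.

Lemma tdiffD x y : d (x + y) = d x + d y.
Proof. by rewrite /tdiff -big_split; apply: eq_bigr => U _; rewrite ffunE tscaleDl. Qed.

Lemma tdiff0 : d 0 = 0.
Proof. by rewrite /tdiff big1 // => U _; rewrite ffunE tscale0l. Qed.

Lemma tdiffN x : d (- x) = - d x.
Proof. by apply/eqP; rewrite -subr_eq0 opprK -tdiffD addNr tdiff0. Qed.

Lemma tdiffZ c x : d (tscale c x) = tscale c (d x).
Proof. by rewrite /tdiff tscale_sumr; apply: eq_bigr => U _; rewrite ffunE tscaleA. Qed.

Lemma tdiff_sum I (r : seq I) (Q : pred I) (F : I -> T) :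
  d (\sum_(i <- r | Q i) F i) = \sum_(i <- r | Q i) d (F i).
Proof. exact: (big_morph _ tdiffD tdiff0). Qed.

Lemma tdiff_tbasis U : d (e U) = de U.
Proof.
rewrite /tdiff (bigD1 U) //= big1 => [|V /negPf VU].
  by rewrite ffunE eqxx tscale1 addr0.
by rewrite ffunE VU tscale0l.
Qed.

Lemma tmulDl x y z : mul (x + y) z = mul x z + mul y z.
Proof.
rewrite /tmul -big_split; apply: eq_bigr => V _; rewrite -big_split.
by apply: eq_bigr => W _; rewrite ffunE mulrDl tscaleDl.
Qed.

Lemma tmulDr x y z : mul z (x + y) = mul z x + mul z y.
Proof.
rewrite /tmul -big_split; apply: eq_bigr => V _; rewrite -big_split.
by apply: eq_bigr => W _; rewrite ffunE mulrDr tscaleDl.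
Qed.

Lemma tmul0l x : mul 0 x = 0.
Proof.
by rewrite /tmul big1 // => V _; rewrite big1 // => W _; rewrite ffunE mul0r tscale0l.
Qed.

Lemma tmul0r x : mul x 0 = 0.
Proof.
by rewrite /tmul big1 // => V _; rewrite big1 // => W _; rewrite ffunE mulr0 tscale0l.
Qed.

Lemma tmulNl x y : mul (- x) y = - mul x y.
Proof. by apply/eqP; rewrite -subr_eq0 opprK -tmulDl addNr tmul0l. Qed.

Lemma tmulNr x y : mul x (- y) = - mul x y.
Proof. by apply/eqP; rewrite -subr_eq0 opprK -tmulDr addNr tmul0r. Qed.

Lemma tmulZl c x y : mul (tscale c x) y = tscale c (mul x y).
Proof.
rewrite /tmul tscale_sumr; apply: eq_bigr => V _; rewrite tscale_sumr.
by apply: eq_bigr => W _; rewrite ffunE tscaleA mulrA.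
Qed.

Lemma tmulZr c x y : mul x (tscale c y) = tscale c (mul x y).
Proof.
rewrite /tmul tscale_sumr; apply: eq_bigr => V _; rewrite tscale_sumr.
by apply: eq_bigr => W _; rewrite ffunE tscaleA mulrCA.
Qed.

Lemma tmul_suml I (r : seq I) (Q : pred I) (F : I -> T) y :
  mul (\sum_(i <- r | Q i) F i) y = \sum_(i <- r | Q i) mul (F i) y.
Proof. exact: (big_morph (mul^~ y) (fun a b => tmulDl a b y) (tmul0l y)). Qed.

Lemma tmul_sumr I (r : seq I) (Q : pred I) (F : I -> T) x :
  mul x (\sum_(i <- r | Q i) F i) = \sum_(i <- r | Q i) mul x (F i).
Proof. exact: (big_morph (mul x) (fun a b => tmulDr a b x) (tmul0r x)). Qed.

Lemma tmul_tbasisl V y : mul (e V) y = \sum_W tscale (y W) (eprod R g V W).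
Proof.
rewrite /tmul (bigD1 V) //= [X in _ + X]big1 => [|U /negPf UV].
  by rewrite addr0; apply: eq_bigr => W _; rewrite ffunE eqxx mul1r.
by rewrite big1 // => W _; rewrite ffunE UV mul0r tscale0l.
Qed.

Lemma tmul_tbasisr W x : mul x (e W) = \sum_V tscale (x V) (eprod R g V W).
Proof.
rewrite /tmul; apply: eq_bigr => V _; rewrite (bigD1 W) //= big1 => [|U /negPf UW].
  by rewrite ffunE eqxx mulr1 addr0.
by rewrite ffunE UW mulr0 tscale0l.
Qed.

Lemma tmul_tbasis V W : mul (e V) (e W) = eprod R g V W.
Proof.
rewrite tmul_tbasisl (bigD1 W) //= big1 => [|U /negPf UW].
  by rewrite ffunE eqxx tscale1 addr0.
by rewrite ffunE UW tscale0l.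
Qed.

Local Notation mq := (mquo R g).
Local Notation ep := (eprod R g).

Lemma mpolyX_sign_mul_eq (a b a' b' : nat) (p q p' q' : 'X_{1..n}) :
  odd (a + b) = odd (a' + b') -> (p + q = p' + q')%MM ->
  ((-1) ^+ a * 'X_[p]) * ((-1) ^+ b * 'X_[q]) =
  ((-1) ^+ a' * 'X_[p']) * ((-1) ^+ b' * 'X_[q']) :> P.
Proof.
move=> hodd hmon.
transitivity ((-1) ^+ (a + b) * 'X_[p + q]%MM : P); first by rewrite exprD mpolyXD; ring.
by rewrite -signr_odd hodd signr_odd hmon exprD mpolyXD; ring.
Qed.

Lemma mquo_mul U V W : W \subset V -> V \subset U -> mq U V * mq V W = mq U W.
Proof.
move=> sWV sVU; rewrite -mpolyXD; congr 'X_[_]; apply/mnmP => j.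
by rewrite mnmDE !mnmE -!mlcmE; have := mlcmS g j sWV; have := mlcmS g j sVU; lia.
Qed.

Lemma tdiff_dbasis U : d (de U) = 0.
Proof.
pose F u v := tscale ((-1) ^+ (sgn_pos u U + sgn_pos v (U :\ u)) * mq U (U :\ u :\ v))
  (e (U :\ u :\ v)).
transitivity (\sum_(u in U) \sum_(v in U :\ u) F u v).
  rewrite tdiff_sum; apply: eq_bigr => u uU; rewrite tdiffZ tdiff_tbasis tscale_sumr.
  by apply: eq_bigr => v vUu; rewrite tscaleA mulrACA -exprD mquo_mul ?subD1set.
apply: (big_distinct_pairs_antisym (F := F)) => u v uU vU ltuv.
rewrite /F [U :\ v :\ u]setDDl setUC -setDDl -tscaleDl -mulrDl.
rewrite (sgn_posD1 v u U) (sgn_posD1 u v U) uU vU ltuv ltnNge ltnW //=.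
by rewrite !exprD expr0 expr1 mul1r mulN1r mulNr [(-1) ^+ sgn_pos v _ * _]mulrC
  subrr mul0r tscale0l.
Qed.

Lemma eprodE V W : [disjoint V & W] -> ep V W =
  tscale ((-1) ^+ sgn_pair V W *
    'X_[ [multinom (mlcm g V j + mlcm g W j - mlcm g (V :|: W) j)%N | j < n] ])
    (e (V :|: W)).
Proof. by rewrite /eprod => ->. Qed.

Lemma eprod0 V W : ~~ [disjoint V & W] -> ep V W = 0.
Proof. by rewrite /eprod => /negPf->. Qed.

Lemma tmul_dbasisl V W : mul (de V) (e W) =
  \sum_(v in V) tscale ((-1) ^+ sgn_pos v V * mq V (V :\ v)) (ep (V :\ v) W).
Proof. by rewrite tmul_suml; apply: eq_bigr => v _; rewrite tmulZl tmul_tbasis. Qed.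

Lemma tmul_dbasisr V W : mul (e V) (de W) =
  \sum_(w in W) tscale ((-1) ^+ sgn_pos w W * mq W (W :\ w)) (ep V (W :\ w)).
Proof. by rewrite tmul_sumr; apply: eq_bigr => w _; rewrite tmulZr tmul_tbasis. Qed.

Lemma tdiff_eprod_disjoint V W : [disjoint V & W] ->
  d (ep V W) = mul (de V) (e W) + tscale ((-1) ^+ #|V|) (mul (e V) (de W)).
Proof.
move=> dVW; rewrite tmul_dbasisl tmul_dbasisr tscale_sumr (eprodE dVW) tdiffZ.
rewrite tdiff_tbasis /dbasis tscale_sumr (eq_bigl [predU V & W]) ?bigU //; last first.
  by move=> x; rewrite !inE.
congr (_ + _); apply: eq_bigr => x xVW.
- have dx : [disjoint V :\ x & W] by apply: disjointWl dVW; apply: subD1set.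
  rewrite (eprodE dx) !tscaleA setDUl (setD1_notin (negbT (disjointFr dVW xVW))).
  congr tscale; apply: mpolyX_sign_mul_eq; first exact: sgn_pair_disjointl.
  apply/mnmP => j; rewrite !mnmDE !mnmE -!mlcmE.
  have := mlcmU g V W j; have := mlcmU g (V :\ x) W j.
  have := mlcmS g j (subD1set V x); lia.
- have dx : [disjoint V & W :\ x] by apply: disjointWr dVW; apply: subD1set.
  rewrite (eprodE dx) !tscaleA setDUl (setD1_notin (negbT (disjointFl dVW xVW))).
  congr tscale; rewrite [(-1) ^+ #|V| * _]mulrA -exprD.
  apply: mpolyX_sign_mul_eq; first by rewrite sgn_pair_disjointr.
  apply/mnmP => j; rewrite !mnmDE !mnmE -!mlcmE.
  have := mlcmU g V W j; have := mlcmU g V (W :\ x) j.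
  have := mlcmS g j (subD1set W x); lia.
Qed.

Lemma eprod_meet_cancel u V W : V :&: W = [set u] ->
  tscale ((-1) ^+ sgn_pos u V * mq V (V :\ u)) (ep (V :\ u) W) +
  tscale ((-1) ^+ #|V|) (tscale ((-1) ^+ sgn_pos u W * mq W (W :\ u)) (ep V (W :\ u)))
  = 0.
Proof.
move=> VWu; have meet : ~~ [disjoint V & W].
  by rewrite -setI_eq0 VWu; apply/set0Pn; exists u; rewrite set11.
have /andP[uV dl] : (u \in V) && [disjoint V :\ u & W].
  by rewrite -setI_eq1_disjointD1l // VWu.
have /andP[uW dr] : (u \in W) && [disjoint V & W :\ u].
  by rewrite -setI_eq1_disjointD1r // VWu.
have eUl : V :\ u :|: W = V :|: W.
  by apply/setP => x; rewrite !inE; case: (x =P u) => [->|]; rewrite ?uV ?uW ?orbT.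
have eUr : V :|: W :\ u = V :|: W.
  by apply/setP => x; rewrite !inE; case: (x =P u) => [->|]; rewrite ?uV ?uW ?orbT.
rewrite (eprodE dl) (eprodE dr) !tscaleA eUl eUr -tscaleDl (_ : _ + _ = 0) ?tscale0l //.
apply/eqP; rewrite addr_eq0 -!mulNr -[- (-1) ^+ #|V|]mulN1r -exprS.
rewrite [(-1) ^+ #|V|.+1 * _]mulrA -exprD; apply/eqP.
apply: mpolyX_sign_mul_eq; first by rewrite addSn /= sgn_pair_meet.
apply/mnmP => j; rewrite !mnmDE !mnmE -!mlcmE.
have := mlcmU g (V :\ u) W j; have := mlcmU g V (W :\ u) j; rewrite eUl eUr.
have := mlcmS g j (subD1set V u); have := mlcmS g j (subD1set W u); lia.
Qed.

Lemma tdiff_eprod V W :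
  d (ep V W) = mul (de V) (e W) + tscale ((-1) ^+ #|V|) (mul (e V) (de W)).
Proof.
have [dVW | meet] := boolP [disjoint V & W]; first exact: tdiff_eprod_disjoint.
rewrite eprod0 // tdiff0 tmul_dbasisl tmul_dbasisr tscale_sumr; apply/esym.
rewrite (bigID (fun v => [disjoint V :\ v & W])) [X in _ + X + _]big1 ?addr0 /=;
  last by move=> v /andP[_ nd]; rewrite eprod0 // tscale0r.
rewrite [X in _ + X](bigID (fun w => [disjoint V & W :\ w])).
rewrite [X in _ + (_ + X)]big1 ?addr0 /=;
  last by move=> w /andP[_ nd]; rewrite eprod0 // !tscale0r.
rewrite (eq_bigl (fun v => V :&: W == [set v])) => [|v]; last first.
  by rewrite setI_eq1_disjointD1l.
rewrite [X in _ + X](eq_bigl (fun w => V :&: W == [set w])) => [|w]; last first.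
  by rewrite setI_eq1_disjointD1r.
by rewrite -big_split big1 // => u /eqP /eprod_meet_cancel.
Qed.

End TaylorAlgebra.

Section DgIdeal.
Variables (R : fieldType) (n m : nat) (g : 'I_m -> 'X_{1..n}).
Variable A : {set {set 'I_m} * {set 'I_m}}.
Hypothesis Aplus_superset :
  forall V W : {set 'I_m}, V \in Aplus A -> V \subset W -> W \in Aplus A.
Local Notation T := (Tay R n m).
Local Notation J := (@inJ R n m g A).
Local Notation e := (tbasis R n).
Local Notation de := (dbasis R g).
Local Notation d := (@tdiff R n m g).
Local Notation mul := (@tmul R n m g).
Implicit Types (V W : {set 'I_m}) (t x y : T).

Lemma inJ0 : J 0.
Proof.
exists (fun _ => 0), (fun _ => 0); rewrite big1 // => V _.
by rewrite !tscale0l addr0.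
Qed.

Lemma inJD x y : J x -> J y -> J (x + y).
Proof.
move=> [c1 [d1 ->]] [c2 [d2 ->]]; exists (c1 \+ c2), (d1 \+ d2).
by rewrite -big_split; apply: eq_bigr => V _; rewrite !tscaleDl addrACA.
Qed.

Lemma inJZ c x : J x -> J (tscale c x).
Proof.
move=> [c1 [d1 ->]]; exists (fun V => c * c1 V), (fun V => c * d1 V).
by rewrite tscale_sumr; apply: eq_bigr => V _; rewrite tscaleDr !tscaleA.
Qed.

Lemma inJN x : J x -> J (- x).
Proof. by rewrite -tscaleN1; apply: inJZ. Qed.

Lemma inJ_sum I (r : seq I) (Q : pred I) (F : I -> T) :
  (forall i, Q i -> J (F i)) -> J (\sum_(i <- r | Q i) F i).
Proof.
move=> JF; elim/big_rec: _ => [|i x Qi Jx]; first exact: inJ0.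
by apply: inJD => //; apply: JF.
Qed.

Lemma inJ_tbasis V : V \in Aplus A -> J (e V).
Proof.
move=> VA; exists (fun U => (U == V)%:R), (fun _ => 0).
rewrite (bigD1 V) //= big1 => [|U /andP[_ /negPf->]]; rewrite !tscale0l !addr0 //.
by rewrite eqxx tscale1.
Qed.

Lemma inJ_dbasis V : V \in Aplus A -> J (de V).
Proof.
move=> VA; exists (fun _ => 0), (fun U => (U == V)%:R).
rewrite (bigD1 V) //= big1 => [|U /andP[_ /negPf->]]; rewrite !tscale0l ?add0r ?addr0 //.
by rewrite eqxx tscale1 tdiff_tbasis.
Qed.

Lemma inJ_tdiff x : J x -> J (d x).
Proof.
move=> [c [d' ->]]; rewrite tdiff_sum; apply: inJ_sum => V VA.
rewrite tdiffD !tdiffZ !tdiff_tbasis tdiff_dbasis tscale0r addr0.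
exact/inJZ/inJ_dbasis.
Qed.

Lemma inJ_eprodl V W : V \in Aplus A -> J (eprod R g V W).
Proof.
move=> VA; have [dVW | meet] := boolP [disjoint V & W]; last first.
  by rewrite eprod0 //; apply: inJ0.
by rewrite eprodE //; apply/inJZ/inJ_tbasis/(Aplus_superset VA)/subsetUl.
Qed.

Lemma inJ_eprodr V W : W \in Aplus A -> J (eprod R g V W).
Proof.
move=> WA; have [dVW | meet] := boolP [disjoint V & W]; last first.
  by rewrite eprod0 //; apply: inJ0.
by rewrite eprodE //; apply/inJZ/inJ_tbasis/(Aplus_superset WA)/subsetUr.
Qed.

Lemma inJ_tmul_tbasisl t V : V \in Aplus A -> J (mul (e V) t).
Proof.
by move=> VA; rewrite tmul_tbasisl; apply: inJ_sum => W _; apply/inJZ/inJ_eprodl.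
Qed.

Lemma inJ_tmul_tbasisr t V : V \in Aplus A -> J (mul t (e V)).
Proof.
by move=> VA; rewrite tmul_tbasisr; apply: inJ_sum => W _; apply/inJZ/inJ_eprodr.
Qed.

Lemma inJ_tmul_dbasisl t V : V \in Aplus A -> J (mul (de V) t).
Proof.
move=> VA; rewrite (tay_decomp t) tmul_sumr; apply: inJ_sum => W _; rewrite tmulZr.
apply: inJZ; rewrite (_ : mul (de V) (e W) = d (eprod R g V W) -
    tscale ((-1) ^+ #|V|) (mul (e V) (de W))); last by rewrite tdiff_eprod addrK.
by apply: inJD; [apply/inJ_tdiff/inJ_eprodl | apply/inJN/inJZ/inJ_tmul_tbasisl].
Qed.

Lemma inJ_tmul_dbasisr t V : V \in Aplus A -> J (mul t (de V)).
Proof.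
move=> VA; rewrite (tay_decomp t) tmul_suml; apply: inJ_sum => W _; rewrite tmulZl.
apply: inJZ; rewrite (_ : mul (e W) (de V) = tscale ((-1) ^+ #|W|)
    (d (eprod R g W V) - mul (de W) (e V))); last first.
  by rewrite tdiff_eprod addrC addKr tscale_sign_invol.
by apply/inJZ/inJD; [apply/inJ_tdiff/inJ_eprodr | apply/inJN/inJ_tmul_tbasisr].
Qed.

Lemma inJ_tmul t x : J x -> J (mul t x) /\ J (mul x t).
Proof.
move=> [c [c' ->]]; rewrite tmul_sumr tmul_suml.
split; apply: inJ_sum => V VA; rewrite tdiff_tbasis.
  rewrite tmulDr !tmulZr.
  by apply: inJD; apply: inJZ; [apply: inJ_tmul_tbasisr | apply: inJ_tmul_dbasisr].
rewrite tmulDl !tmulZl.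
by apply: inJD; apply: inJZ; [apply: inJ_tmul_tbasisl | apply: inJ_tmul_dbasisl].
Qed.

End DgIdeal.

Theorem mainTheorem1 (R : fieldType) (n m : nat) (g : 'I_m -> 'X_{1..n})
  (A : {set {set 'I_m} * {set 'I_m}}) :
  injective g ->
  minimal_gens g ->
  morse_matching g A ->
  (forall V W : {set 'I_m}, V \in Aplus A -> V \subset W -> W \in Aplus A) ->
  (forall x : Tay R n m, inJ g A x -> inJ g A (tdiff g x)) /\
  (forall t x : Tay R n m, inJ g A x ->
     inJ g A (tmul g t x) /\ inJ g A (tmul g x t)) /\
  (forall a a' b b' : Tay R n m, inJ g A (a - a')%R -> inJ g A (b - b')%R ->
     inJ g A (tmul g a b - tmul g a' b')%R /\ inJ g A (tdiff g a - tdiff g a')%R).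
Proof.
move=> _ _ _ Aplus_superset.
split; first exact: inJ_tdiff.
split; first by move=> t x; apply: inJ_tmul.
move=> a a' b b' Ja Jb; split; last by rewrite -tdiffN -tdiffD; apply: inJ_tdiff.
have -> : tmul g a b - tmul g a' b' = tmul g (a - a') b + tmul g a' (b - b').
  by rewrite tmulDl tmulDr tmulNl tmulNr addrA addrNK.
apply: inJD; first by case: (inJ_tmul Aplus_superset b Ja).
by case: (inJ_tmul Aplus_superset a' Jb).
Qed.
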